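(* Let $X$ be a real random variable with law $\mu$ describing the agents' types, with $\mu$ satisfying the standing assumptions below and $\int|x|\,d\mu<+\infty$. If $\vec v_\mu$ is the optimal percentile vector associated with $X$, then $\vec v_\mu$ is also the optimal percentile vector for every random variable of the form $X'=\sigma X+m$ with $m\in\mathbb{R}$ and $\sigma>0$.
   Context: For $\vec x\in\mathbb{R}^n$, $\vec y\in\mathbb{R}^k$: $SC(\vec x,\vec y)=\frac1n\sum_i\min_j|x_i-y_j|$, $SC_{opt}(\vec x)=\min_{\vec y}SC(\vec x,\vec y)$. A percentile vector is $\vec v$ with $0\le v_1\le\dots\le v_k\le1$; $\mathcal{PM}_{\vec v}$ sorts the reports $x_{(1)}\le\dots\le x_{(n)}$ and places facility $j$ at $x_{(\lfloor(n-1)v_j\rfloor+1)}$. For a law $\eta$ and $\vec X_n$ i.i.d. of law $\eta$, $B^{(n)}_{ar}(f)=\mathbb{E}[SC_f(\vec X_n)]/\mathbb{E}[SC_{opt}(\vec X_n)]$. The optimal percentile vector associated with a random variable of law $\eta$ is $(F_\eta(y_1),\dots,F_\eta(y_k))$, where $y_1\le\dots\le y_k$ are the support points of a solution of $\min_{\lambda\in\mathcal{P}_k(\mathbb{R})}W_1(\eta,\lambda)$ ($\mathcal{P}_k(\mathbb{R})$: probability measures $\sum_{j=1}^k\nu_j\delta_{x_j}$; $W_1$: 1-Wasserstein distance; $F_\eta$: c.d.f.); it satisfies $\lim_n B^{(n)}_{ar}(\mathcal{PM}_{\vec v})=1$. Standing assumptions on $\mu$: absolutely continuous with density $\rho_\mu$;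 support an interval on whose interior $\rho_\mu>0$; $\rho_\mu$ differentiable on the support. *)

From HB Require Import structures.
From mathcomp Require Import all_boot all_order all_algebra.
From mathcomp Require Import all_classical all_reals all_analysis.
Set Implicit Arguments. Unset Strict Implicit. Unset Printing Implicit Defensive.
Import Order.TTheory GRing.Theory Num.Theory.
Import numFieldNormedType.Exports.
Local Open Scope classical_set_scope.
Local Open Scope ring_scope.

Definition cdfR (R : realType) (eta : set R -> \bar R) (y : R) : R :=
  fine (eta [set` `]-oo, y]]).

Definition discrete_meas (R : realType) (k : nat) (x nu : 'I_k -> R)
  : set R -> \bar R :=
  fun A => (\sum_(j < k) (nu j)%:E * \d_(x j) A)%E.

(* nu is a family of probability weights, so that discrete_meas x nu is in P_k(R) *)
Definition prob_weights (R : realType) (k : nat) (nu : 'I_k -> R) : Prop :=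
  (forall j, 0 <= nu j) /\ \sum_(j < k) nu j = 1.

Definition is_coupling (R : realType) (eta lam : set R -> \bar R)
  (pi : probability (R * R)%type R) : Prop :=
  forall A : set R, measurable A ->
    pi (A `*` setT) = eta A /\ pi (setT `*` A) = lam A.

Definition W1 (R : realType) (eta lam : set R -> \bar R) : \bar R :=
  ereal_inf [set (\int[pi]_z (`|z.1 - z.2|)%:E)%E
            | pi in [set pi : probability (R * R)%type R | is_coupling eta lam pi]].

Definition optimal_percentile_vector (R : realType) (k : nat)
  (eta : set R -> \bar R) (v : 'I_k -> R) : Prop :=
  exists (y nu : 'I_k -> R),
    [/\ (forall i j : 'I_k, (i <= j)%N -> y i <= y j),
        prob_weights nu /\ (forall j, 0 < nu j),
        (forall x' nu' : 'I_k -> R, prob_weights nu' ->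
            (W1 eta (discrete_meas y nu) <= W1 eta (discrete_meas x' nu'))%E)
      & forall j, v j = cdfR eta (y j)].

Definition standing_assumptions (R : realType) (mu : set R -> \bar R) : Prop :=
  exists rho : R -> R,
    [/\ measurable_fun setT rho,
        (forall x, 0 <= rho x),
        (forall A, measurable A ->
           mu A = (\int[@lebesgue_measure R]_(x in A) (rho x)%:E)%E)
      & exists I : set R,
          [/\ is_interval I,
              (forall x, ~ I x -> rho x = 0),
              (forall x, interior I x -> 0 < rho x)
            & (forall x, interior I x -> derivable rho x 1)]].
Arguments optimal_percentile_vector {R} k eta v.

(* An increasing affine map T x = sigma x + m pushes every coupling of two laws
   to a coupling of their images and multiplies the transport cost |x - y| by
   sigma; since T is invertible, W1(T#eta, T#lam) = sigma W1(eta, lam).  T also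
   acts bijectively on the k-atom measures, preserving the order of the atoms,
   so it maps W1-minimisers for eta to W1-minimisers for T#eta, and
   F_{T#eta}(T y) = F_eta(y) leaves the percentiles unchanged. *)

From HB Require Import structures.
From mathcomp Require Import all_boot all_order all_algebra.
From mathcomp Require Import all_classical all_reals all_analysis.
From mathcomp Require Import measurable_realfun.
Set Implicit Arguments.
Unset Strict Implicit.
Unset Printing Implicit Defensive.

Import Order.TTheory GRing.Theory Num.Theory.
Import numFieldNormedType.Exports.
Local Open Scope classical_set_scope.
Local Open Scope ring_scope.

Section pushforward.
Context {R : realType}.

Definition pushforward_of (f : R -> R) (eta eta' : set R -> \bar R) : Prop :=
  forall A, measurable A -> eta' A = eta (f @^-1` A).

Lemma pushforward_of_cancel (f g : R -> R) (eta eta' : set R -> \bar R) :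
  measurable_fun setT g -> cancel f g ->
  pushforward_of f eta eta' -> pushforward_of g eta' eta.
Proof.
move=> mg fK hf A mA; rewrite hf; last first.
  by rewrite -[X in measurable X]setTI; apply: mg.
by rewrite -comp_preimage (_ : g \o f = id) //; apply/funext => x /=; rewrite fK.
Qed.

Lemma pushforward_of_discrete_meas (f : R -> R) (k : nat) (x nu : 'I_k -> R) :
  pushforward_of f (discrete_meas x nu) (discrete_meas (f \o x) nu).
Proof. by move=> A _; apply: eq_bigr => j _; rewrite !diracE. Qed.

Lemma pushforward_of_distribution d (Omega : measurableType d)
    (P : probability Omega R) (f : R -> R) (X X' : {mfun Omega >-> R}) :
  (forall w, X' w = f (X w)) ->
  pushforward_of f (distribution P X) (distribution P X').
Proof.
move=> hX' A _; congr (P _).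
by apply/funext => w /=; rewrite hX'.
Qed.

Lemma measurable_fun_map_pair {f : R -> R} :
  measurable_fun setT f -> measurable_fun setT (unstable.map_pair f).
Proof.
move=> mf; apply: measurable_fun_pair.
- exact: measurableT_comp mf measurable_fst.
- exact: measurableT_comp mf measurable_snd.
Qed.

HB.instance Definition _ (f : {mfun R >-> R}) :=
  isMeasurableFun.Build _ _ _ _ (unstable.map_pair f)
    (measurable_fun_map_pair (measurable_funPT f)).

Lemma is_coupling_map_pair (f : {mfun R >-> R})
    (eta lam eta' lam' : set R -> \bar R) (pi : probability (R * R)%type R) :
  pushforward_of f eta eta' -> pushforward_of f lam lam' ->
  is_coupling eta lam pi ->
  is_coupling eta' lam' (distribution pi (unstable.map_pair f)).
Proof.
move=> heta hlam cpl A mA; have mfA : measurable (f @^-1` A).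
  by rewrite -[X in measurable X]setTI; apply: measurable_funPT.
split.
- change (pi (unstable.map_pair f @^-1` (A `*` setT)) = eta' A).
  have -> : unstable.map_pair f @^-1` (A `*` setT) = (f @^-1` A) `*` setT.
    by apply/seteqP; split => z /= [].
  by rewrite heta // (cpl _ mfA).1.
- change (pi (unstable.map_pair f @^-1` (setT `*` A)) = lam' A).
  have -> : unstable.map_pair f @^-1` (setT `*` A) = setT `*` (f @^-1` A).
    by apply/seteqP; split => z /= [].
  by rewrite hlam // (cpl _ mfA).2.
Qed.

End pushforward.

Section affine.
Context {R : realType}.

Definition aff (a b x : R) : R := a * x + b.

Lemma measurable_aff (a b : R) : measurable_fun setT (aff a b).
Proof.
apply: measurable_funD; last exact: measurable_cst.
by apply: measurable_funM; [exact: measurable_cst | exact: measurable_id].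
Qed.

HB.instance Definition _ (a b : R) :=
  isMeasurableFun.Build _ _ _ _ (aff a b) (measurable_aff a b).

Lemma affK (a b : R) : a != 0 -> cancel (aff a b) (aff a^-1 (- (b / a))).
Proof. by move=> a0 x; rewrite /aff mulrDr mulrA mulVf // mul1r mulrC addrK. Qed.

Lemma affKV (a b : R) : a != 0 -> cancel (aff a^-1 (- (b / a))) (aff a b).
Proof.
move=> a0 x; rewrite /aff mulrDr mulrA mulfV // mul1r mulrN.
by rewrite mulrC mulfVK // addrNK.
Qed.

Lemma ler_aff (a b x y : R) : 0 < a -> (aff a b x <= aff a b y) = (x <= y).
Proof. by move=> a0; rewrite /aff lerD2r ler_pM2l. Qed.

Lemma dist_aff (a b x y : R) : 0 < a -> `|aff a b x - aff a b y| = a * `|x - y|.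
Proof.
by move=> a0; rewrite /aff opprD addrACA subrr addr0 -mulrBr normrM gtr0_norm.
Qed.

Lemma cdfR_pushforward_aff (a b y : R) (eta eta' : set R -> \bar R) :
  0 < a -> pushforward_of (aff a b) eta eta' ->
  cdfR eta' (aff a b y) = cdfR eta y.
Proof.
move=> a0 heta; rewrite /cdfR heta //; congr (fine (eta _)).
by apply/funext => x /=; rewrite !in_itv /= ler_aff.
Qed.

Lemma integral_dist_map_pair_aff (a b : R) (pi : probability (R * R)%type R) :
  0 < a ->
  (\int[distribution pi (unstable.map_pair (aff a b))]_z (`|z.1 - z.2|)%:E =
   a%:E * \int[pi]_z (`|z.1 - z.2|)%:E)%E.
Proof.
move=> a0.
have mdist : measurable_fun setT (fun z : R * R => (`|z.1 - z.2|)%:E).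
  apply/measurable_EFinP; apply: measurableT_comp; first exact: normr_measurable.
  exact: measurable_funB measurable_fst measurable_snd.
rewrite ge0_integral_pushforward // preimage_setT.
rewrite -ge0_integralZl_EFin //; last exact: ltW.
by apply: eq_integral => z _ /=; rewrite dist_aff.
Qed.

Lemma W1_pushforward_aff_le (a b : R) (eta lam eta' lam' : set R -> \bar R) :
  0 < a -> pushforward_of (aff a b) eta eta' -> pushforward_of (aff a b) lam lam' ->
  (W1 eta' lam' <= a%:E * W1 eta lam)%E.
Proof.
move=> a0 heta hlam; rewrite -ereal_inf_pZl //.
apply: le_ereal_inf_tmp => _ [_ [pi cpl <-] <-].
rewrite -(integral_dist_map_pair_aff b) //; apply: ereal_inf_lbound.
by eexists; first exact: is_coupling_map_pair heta hlam cpl.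
Qed.

Lemma W1_pushforward_aff (a b : R) (eta lam eta' lam' : set R -> \bar R) :
  0 < a -> pushforward_of (aff a b) eta eta' -> pushforward_of (aff a b) lam lam' ->
  W1 eta' lam' = (a%:E * W1 eta lam)%E.
Proof.
move=> a0 heta hlam; have a_neq0 : a != 0 by rewrite gt_eqF.
apply/le_anti; rewrite (W1_pushforward_aff_le a0 heta hlam) /= -lee_pdivlMl //.
have inv_pushforward := pushforward_of_cancel (measurable_aff _ _) (affK b a_neq0).
apply: W1_pushforward_aff_le; first by rewrite invr_gt0.
- exact: inv_pushforward heta.
- exact: inv_pushforward hlam.
Qed.

Lemma optimal_percentile_vector_aff (a b : R) (k : nat) (eta eta' : set R -> \bar R)
    (v : 'I_k -> R) :
  0 < a -> pushforward_of (aff a b) eta eta' ->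
  optimal_percentile_vector k eta v -> optimal_percentile_vector k eta' v.
Proof.
move=> a0 heta [y [nu [ymono hnu yopt hv]]].
exists (aff a b \o y), nu; split => //.
- by move=> i j ij; rewrite /= ler_aff // ymono.
- move=> x' nu' hnu'.
  have -> : x' = aff a b \o (aff a^-1 (- (b / a)) \o x').
    by apply/funext => j /=; rewrite affKV // gt_eqF.
  rewrite !(W1_pushforward_aff a0 heta (pushforward_of_discrete_meas _ _ _)).
  by apply: lee_wpmul2l; [rewrite lee_fin ltW | exact: yopt hnu'].
- by move=> j; rewrite hv /= (cdfR_pushforward_aff _ a0 heta).
Qed.

End affine.

Theorem theorem8 (R : realType) (d : measure_display) (Omega : measurableType d)
  (P : probability Omega R) (X : {RV P >-> R}) :
  standing_assumptions (distribution P X) ->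
  (\int[distribution P X]_x (`|x|)%:E < +oo)%E ->
  forall (k : nat) (v : 'I_k -> R),
    optimal_percentile_vector k (distribution P X) v ->
    forall (sigma m : R), 0 < sigma ->
    forall X' : {RV P >-> R}, (forall w, X' w = sigma * X w + m) ->
      optimal_percentile_vector k (distribution P X') v.
Proof.
move=> _ _ k v hv sigma m sigma0 X' hX'.
apply: (optimal_percentile_vector_aff sigma0 _ hv).
exact: pushforward_of_distribution hX'.
Qed.
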